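(* (a) For every single-qubit density matrix $\sigma$ there exist non-negative functions $w^0_\sigma,w^1_\sigma:\mathbb{Z}_2^2\to[0,\infty)$ with $\sum_{\mathbf{u}}(w^0_\sigma(\mathbf{u})+w^1_\sigma(\mathbf{u}))=1$ and $\sigma=\sum_{\mathbf{u}\in\mathbb{Z}_2^2}\big(w^0_\sigma(\mathbf{u})A^{0}(\mathbf{u})+w^1_\sigma(\mathbf{u})A^{a_xa_z}(\mathbf{u})\big)$, where $A^{a_xa_z}$ uses the single-qubit frame function $F(a_x,a_z)=a_xa_z$. (b) Consequently, every $n$-qubit product state $\rho=\bigotimes_{i=1}^n\rho_i$ has the non-negative representation $\rho=\sum_{\mathbf{b}\in\mathbb{Z}_2^n}\sum_{\mathbf{u}\in\mathbb{Z}_2^{2n}}W^{F_{\mathbf{b}}}(\mathbf{u})A^{F_{\mathbf{b}}}(\mathbf{u})$ over the set of frame functions $\mathcal{F}=\{F_{\mathbf{b}}:\mathbf{b}\in\mathbb{Z}_2^n\}$, $F_{\mathbf{b}}(\mathbf{a})=\sum_{i=1}^nb_ia_{ix}a_{iz}$, with product weights $W^{F_{\mathbf{b}}}(\mathbf{u})=\prod_{i=1}^nw^{b_i}_{\rho_i}(u_{ix},u_{iz})$.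
   Context: Let $n\ge 1$. Phase-space points are $\mathbf{u}=(\mathbf{u}_x,\mathbf{u}_z)=(u_{1x},\dots,u_{nx},u_{1z},\dots,u_{nz})\in\mathbb{Z}_2^{2n}$. For $\mathbf{a}\in\mathbb{Z}_2^{2n}$ let $T_{\mathbf{a}}=\bigotimes_{j=1}^n i^{a_{jx}a_{jz}}X^{a_{jx}}Z^{a_{jz}}$, where $X,Z$ are the single-qubit Pauli matrices. The symplectic product is $[\mathbf{u},\mathbf{a}]=\mathbf{u}_x\cdot\mathbf{a}_z+\mathbf{u}_z\cdot\mathbf{a}_x\pmod 2$. A frame function is any $F:\mathbb{Z}_2^{2n}\to\mathbb{Z}_2$ with $F(\mathbf{0})=0$. The phase point operator is $A^F(\mathbf{u})=2^{-n}\sum_{\mathbf{a}\in\mathbb{Z}_2^{2n}}(-1)^{[\mathbf{u},\mathbf{a}]+F(\mathbf{a})}T_{\mathbf{a}}$ (for $n=1$ this gives the single-qubit operators $A^0(\mathbf{u})$, $A^{a_xa_z}(\mathbf{u})$). A non-negative representation of $\rho$ over a finite set $\mathcal{F}$ of frame functions is a function $W:\mathcal{F}\times\mathbb{Z}_2^{2n}\to[0,\infty)$, $(F,\mathbf{u})\mapsto W^F(\mathbf{u})$, with $\sum_{F,\mathbf{u}}W^F(\mathbf{u})=1$ and $\rho=\sum_{F,\mathbf{u}}W^F(\mathbf{u})A^F(\mathbf{u})$. *)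

From HB Require Import structures.
From mathcomp Require Import all_boot all_order all_algebra.
Set Implicit Arguments. Unset Strict Implicit. Unset Printing Implicit Defensive.
Import Order.TTheory GRing.Theory Num.Theory.
Local Open Scope ring_scope.

Definition adjmx (C : numClosedFieldType) m k (M : 'M[C]_(m, k)) : 'M[C]_(k, m) :=
  (map_mx Num.conj M)^T.

Definition density (C : numClosedFieldType) m (rho : 'M[C]_m) : Prop :=
  [/\ adjmx rho = rho,
      (forall v : 'rV[C]_m, 0 <= (v *m rho *m adjmx v) 0 0)
    & \tr rho = 1].

(* qubit j of the computational-basis index i (little endian) *)
Definition bitI (j i : nat) : 'I_2 := inord (odd (i %/ 2 ^ j)).

(* tensor product  M_0 (x) M_1 (x) ... (x) M_{n-1}  of single-qubit operators,
   given entrywise in the computational basis *)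
Definition tens (C : numClosedFieldType) n (M : 'I_n -> 'M[C]_2) : 'M[C]_(2 ^ n) :=
  \matrix_(i, k) \prod_(j < n) M j (bitI j i) (bitI j k).

Definition PX (C : numClosedFieldType) : 'M[C]_2 := \matrix_(i, j) (i != j)%:R.
Definition PZ (C : numClosedFieldType) : 'M[C]_2 :=
  \matrix_(i, j) ((i == j)%:R * (-1) ^+ i).

Definition T1 (C : numClosedFieldType) (ax az : bool) : 'M[C]_2 :=
  ('i ^+ (ax && az)) *: ((if ax then PX C else 1%:M) *m (if az then PZ C else 1%:M)).

(* phase-space points / displacement vectors in Z_2^{2n} = (u_x, u_z) *)
Definition pt (n : nat) := ({ffun 'I_n -> bool} * {ffun 'I_n -> bool})%type.
Definition pt0 n : pt n := ([ffun => false], [ffun => false]).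

Definition Tn (C : numClosedFieldType) n (a : pt n) : 'M[C]_(2 ^ n) :=
  tens (fun j => T1 C (a.1 j) (a.2 j)).

(* symplectic product [u, a] (as a natural number; only its parity matters,
   it is used as an exponent of -1) *)
Definition symp n (u a : pt n) : nat :=
  \sum_(j < n) ((u.1 j && a.2 j) + (u.2 j && a.1 j))%N.

Definition frame_fun n (F : pt n -> bool) : Prop := F (pt0 n) = false.

Definition Aop (C : numClosedFieldType) n (F : pt n -> bool) (u : pt n)
  : 'M[C]_(2 ^ n) :=
  ((2 ^ n)%:R)^-1 *: \sum_(a : pt n) ((-1) ^+ (symp u a + F a)%N) *: Tn C a.

Definition nonneg_rep (C : numClosedFieldType) n (I : finType)
  (F : I -> pt n -> bool) (rho : 'M[C]_(2 ^ n)) (W : I -> pt n -> C) : Prop :=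
  [/\ forall i, frame_fun (F i),
      forall i u, 0 <= W i u,
      \sum_(i : I) \sum_(u : pt n) W i u = 1
    & rho = \sum_(i : I) \sum_(u : pt n) W i u *: Aop C (F i) u].

Definition F0 (a : pt 1) : bool := false.
Definition Fxz (a : pt 1) : bool := a.1 ord0 && a.2 ord0.

Definition pt1 (u : bool * bool) : pt 1 := ([ffun => u.1], [ffun => u.2]).

Definition Fb n (b : {ffun 'I_n -> bool}) (a : pt n) : bool :=
  odd (\sum_(i < n) (b i && a.1 i && a.2 i)).

(* the single-qubit decomposition of part (a): w c u = w^c_sigma(u) *)
Definition single_rep (C : numClosedFieldType) (sigma : 'M[C]_2)
  (w : bool -> bool * bool -> C) : Prop :=
  [/\ forall c u, 0 <= w c u,
      \sum_(u : bool * bool) (w false u + w true u) = 1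
    & sigma = \sum_(u : bool * bool)
               (w false u *: Aop C F0 (pt1 u) + w true u *: Aop C Fxz (pt1 u))].

From HB Require Import structures.
From mathcomp Require Import all_boot all_order all_algebra.
From mathcomp Require Import ring.
Import Order.TTheory GRing.Theory Num.Theory.
Local Open Scope ring_scope.

(* The frame function F_b is a sum of
   single-qubit terms b_i a_ix a_iz, so the phase point operator A^{F_b}(u) is
   the tensor product of the single-qubit operators A^{b_i}(u_ix, u_iz)
   (Aop_Fb); expanding the tensor product of the single-qubit decompositions by
   multilinearity (tens_sum3) yields the product weights (product_rep).

   A unit-trace sigma equals (1 + xX + y(iXZ) + zZ)/2 in
   terms of its Bloch coordinates (bloch_decomposition); positivity of sigma on
   the test vectors (1, +-1), (1, +-i), (1, 0), (0, 1) gives -1 <= x, y, z <= 1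
   (blochX_bound ...).  The weights
     w^c(u_x, u_z) = (1 +- x)(1 +- y)(1 +- z)/8
   with suitable signs are then non-negative, sum to 1 and average the phase
   point operators back to the Pauli expansion of sigma (single_qubit_rep). *)

Lemma prod_sum2 (R : comPzSemiRingType) n (X Y : finType)
    (g : 'I_n -> X -> Y -> R) :
  \prod_i \sum_x \sum_y g i x y =
  \sum_(f1 : {ffun 'I_n -> X}) \sum_(f2 : {ffun 'I_n -> Y})
    \prod_i g i (f1 i) (f2 i).
Proof.
rewrite (bigA_distr_bigA (fun i x => \sum_y g i x y)).
by apply: eq_bigr => f1 _; rewrite bigA_distr_bigA.
Qed.

Lemma prod_sum3 (R : comPzSemiRingType) n (B X Y : finType)
    (g : 'I_n -> B -> X -> Y -> R) :
  \prod_i \sum_c \sum_x \sum_y g i c x y =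
  \sum_(b : {ffun 'I_n -> B}) \sum_(f1 : {ffun 'I_n -> X})
    \sum_(f2 : {ffun 'I_n -> Y}) \prod_i g i (b i) (f1 i) (f2 i).
Proof.
rewrite (bigA_distr_bigA (fun i c => \sum_x \sum_y g i c x y)).
by apply: eq_bigr => b _; rewrite prod_sum2.
Qed.

Lemma sum_bool_split {V : nmodType} (f : bool -> bool * bool -> V) :
  \sum_(u : bool * bool) (f false u + f true u) =
  \sum_(c : bool) \sum_(x : bool) \sum_(y : bool) f c (x, y).
Proof.
rewrite big_split /= big_bool /= addrC.
by congr (_ + _); rewrite pair_bigA /=; apply: eq_bigr => -[].
Qed.

Lemma ord2_cases (p : 'I_2) : p = ord0 \/ p = ord_max.
Proof. by case: p => [[|[|]]] // ?; [left | right]; apply/val_inj. Qed.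

Lemma sum_ord2 {V : nmodType} (F : 'I_2 -> V) :
  \sum_(i < 2) F i = F ord0 + F ord_max.
Proof. by rewrite big_ord_recr big_ord1; congr (F _ + _); apply/val_inj. Qed.

Lemma signed_ge0 (R : numDomainType) (t : R) :
  0 <= 1 + t -> 0 <= 1 - t -> forall k : nat, 0 <= 1 + (-1) ^+ k * t.
Proof.
move=> hp hm k; rewrite -signr_odd.
by case: (odd k); rewrite /= ?expr1 ?expr0 ?mulN1r ?mul1r.
Qed.

Section PhasePointOperators.
Variable C : numClosedFieldType.

Lemma tens_sum3 n (B X Y : finType) (g : 'I_n -> B -> X -> Y -> C)
    (M : 'I_n -> B -> X -> Y -> 'M[C]_2) :
  tens (fun i => \sum_c \sum_x \sum_y g i c x y *: M i c x y) =
  \sum_(b : {ffun 'I_n -> B}) \sum_(f1 : {ffun 'I_n -> X})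
    \sum_(f2 : {ffun 'I_n -> Y})
      (\prod_i g i (b i) (f1 i) (f2 i)) *:
      tens (fun i => M i (b i) (f1 i) (f2 i)).
Proof.
apply/matrixP => r k.
transitivity (\prod_i \sum_c \sum_x \sum_y
                g i c x y * M i c x y (bitI i r) (bitI i k)).
  rewrite mxE; apply: eq_bigr => i _; rewrite summxE; apply: eq_bigr => c _.
  rewrite summxE; apply: eq_bigr => x _; rewrite summxE.
  by apply: eq_bigr => y _; rewrite mxE.
rewrite prod_sum3 summxE; apply: eq_bigr => b _; rewrite summxE.
apply: eq_bigr => f1 _; rewrite summxE; apply: eq_bigr => f2 _.
by rewrite !mxE -big_split.
Qed.

Lemma tens1 (M : 'I_1 -> 'M[C]_2) : tens M = M ord0.
Proof.
apply/matrixP => p q; rewrite mxE big_ord1.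
have bitI0 (i : 'I_2) : bitI 0 i = i.
  by apply/val_inj; case: i => [[|[|]]] //= _; rewrite inordK.
by rewrite !bitI0.
Qed.

Definition phase1 (c ux uz : bool) : 'M[C]_2 :=
  2%:R^-1 *: \sum_(ax : bool) \sum_(az : bool)
     (-1) ^+ ((ux && az) + (uz && ax) + (c && ax && az))%N *: T1 C ax az.

Lemma phase1E c ux uz (p q : 'I_2) :
  phase1 c ux uz p q = 2%:R^-1 * \sum_(ax : bool) \sum_(az : bool)
     (-1) ^+ ((ux && az) + (uz && ax) + (c && ax && az))%N * T1 C ax az p q.
Proof.
rewrite !mxE summxE; congr (_ * _); apply: eq_bigr => ax _.
by rewrite summxE; apply: eq_bigr => az _; rewrite mxE.
Qed.

(* The frame function F_b is a sum of single-qubit frame functions, so the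
   phase point operator A^{F_b}(u) factorizes as a tensor product. *)
Lemma Aop_Fb n (b : {ffun 'I_n -> bool}) (u : pt n) :
  Aop C (Fb b) u = tens (fun j => phase1 (b j) (u.1 j) (u.2 j)).
Proof.
apply/matrixP => r k; rewrite /Aop !mxE summxE.
under [RHS]eq_bigr do rewrite phase1E.
rewrite big_split /= prodr_const card_ord natrX exprVn; congr (_ * _).
rewrite prod_sum2 pair_bigA /=; apply: eq_bigr => -[a1 a2] _ /=.
rewrite mxE /Tn /tens mxE big_split /=; congr (_ * _).
rewrite exprD /Fb signr_odd /symp !expr_sum -big_split /=.
by apply: eq_bigr => j _; rewrite !exprD.
Qed.

(* The single-qubit frame functions 0 and a_x a_z are F_b for b = 0, 1, so
   their phase point operators are the operators phase1. *)
Lemma Aop_single (c : bool) (u : bool * bool) :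
  Aop C (if c then Fxz else F0) (pt1 u) = phase1 c u.1 u.2.
Proof.
have -> : Aop C (if c then Fxz else F0) (pt1 u) =
          Aop C (Fb [ffun => c]) (pt1 u).
  congr (_ *: _); apply: eq_bigr => a _; congr ((-1) ^+ (_ + _)%N *: _).
  by rewrite /Fb big_ord1 ffunE; case: c => //=; rewrite oddb.
by rewrite Aop_Fb tens1 /= !ffunE.
Qed.

Lemma single_rep_sum (w : bool -> bool * bool -> C) :
  \sum_(u : bool * bool)
     (w false u *: Aop C F0 (pt1 u) + w true u *: Aop C Fxz (pt1 u)) =
  \sum_(c : bool) \sum_(x : bool) \sum_(y : bool) w c (x, y) *: phase1 c x y.
Proof.
rewrite -(sum_bool_split (fun c u => w c u *: phase1 c u.1 u.2)).
by under eq_bigr do rewrite (Aop_single false) (Aop_single true).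
Qed.

Lemma product_rep n (rho : 'I_n -> 'M[C]_2)
    (w : 'I_n -> bool -> bool * bool -> C) :
  (forall i, single_rep (rho i) (w i)) ->
  nonneg_rep (Fb (n:=n)) (tens rho)
    (fun b u => \prod_(i < n) w i (b i) (u.1 i, u.2 i)).
Proof.
move=> rep; split.
- by move=> b; rewrite /frame_fun /Fb big1 // => i _; rewrite ffunE andbF.
- by move=> b u; apply: prodr_ge0 => i _; case: (rep i).
- transitivity (\prod_(i < n) \sum_c \sum_x \sum_y w i c (x, y)).
    rewrite prod_sum3; apply: eq_bigr => b _.
    by rewrite [RHS]pair_bigA; apply: eq_bigr => -[f1 f2].
  by rewrite big1 // => i _; case: (rep i) => _ <- _; rewrite sum_bool_split.
- transitivity
    (tens (fun i => \sum_c \sum_x \sum_y w i c (x, y) *: phase1 c x y)).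
    apply/matrixP => r k; rewrite !mxE; apply: eq_bigr => i _.
    by case: (rep i) => _ _ ->; rewrite single_rep_sum.
  rewrite tens_sum3; apply: eq_bigr => b _; rewrite pair_bigA /=.
  by apply: eq_bigr => -[f1 f2] _; rewrite Aop_Fb.
Qed.
End PhasePointOperators.

Definition qubit_weight {R : numFieldType} (x y z : R) (c ux uz : bool) : R :=
  (1 + (-1) ^+ uz * x) * (1 + (-1) ^+ (ux + uz + c)%N * y) *
  (1 + (-1) ^+ ux * z) / 8%:R.

Section Weights.
Variables (R : numFieldType) (x y z : R).

Lemma qubit_weight_ge0 c ux uz :
  (forall k, 0 <= 1 + (-1) ^+ k * x) -> (forall k, 0 <= 1 + (-1) ^+ k * y) ->
  (forall k, 0 <= 1 + (-1) ^+ k * z) -> 0 <= qubit_weight x y z c ux uz.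
Proof. by move=> hx hy hz; rewrite divr_ge0 ?ler0n // !mulr_ge0. Qed.

Lemma qubit_weight_sum :
  \sum_(c : bool) \sum_(ux : bool) \sum_(uz : bool)
    qubit_weight x y z c ux uz = 1.
Proof. by rewrite !big_bool /qubit_weight /=; field. Qed.

Lemma qubit_weight_phase (T : bool -> bool -> R) :
  \sum_(c : bool) \sum_(ux : bool) \sum_(uz : bool) qubit_weight x y z c ux uz *
    (2%:R^-1 * \sum_(ax : bool) \sum_(az : bool)
      (-1) ^+ ((ux && az) + (uz && ax) + (c && ax && az))%N * T ax az)
  = 2%:R^-1 *
    (T false false + x * T true false + y * T true true + z * T false true).
Proof. by rewrite !big_bool /qubit_weight /=; field. Qed.
End Weights.

Section SingleQubit.
Variable C : numClosedFieldType.

Lemma T1E ax az (p q : 'I_2) : T1 C ax az p q =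
  'i ^+ (ax && az) * (if ax then (p != q)%:R else (p == q)%:R) *
  (if az then (-1) ^+ q else 1).
Proof.
rewrite /T1 mxE; case: ax; case: az; rewrite /= !mxE ?sum_ord2 ?mxE;
  case: (ord2_cases p) => ->; case: (ord2_cases q) => -> /=; ring.
Qed.

Definition blochX (sigma : 'M[C]_2) : C :=
  sigma ord0 ord_max + sigma ord_max ord0.
Definition blochY (sigma : 'M[C]_2) : C :=
  'i * (sigma ord0 ord_max - sigma ord_max ord0).
Definition blochZ (sigma : 'M[C]_2) : C :=
  sigma ord0 ord0 - sigma ord_max ord_max.

Definition row2 (v0 v1 : C) : 'rV[C]_2 := \row_(j < 2) [:: v0; v1]`_j.

Lemma row2_form (M : 'M[C]_2) v0 v1 :
  (row2 v0 v1 *m M *m adjmx (row2 v0 v1)) 0 0 =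
  v0 * M ord0 ord0 * v0^* + v0 * M ord0 ord_max * v1^* +
  v1 * M ord_max ord0 * v0^* + v1 * M ord_max ord_max * v1^*.
Proof. by rewrite /adjmx /row2 !mxE !sum_ord2 !mxE !sum_ord2 !mxE /=; ring. Qed.

Lemma conjC_Ni : (- 'i)^* = 'i :> C.
Proof. by rewrite -conjCi conjCK. Qed.

Section DensityMatrix.
Variable sigma : 'M[C]_2.
Hypothesis tr1 : sigma ord0 ord0 + sigma ord_max ord_max = 1.

(* Identities between entries of sigma hold modulo the two relations
   tr sigma = 1 and i^2 = -1; this discharges them by ring normalization. *)
Lemma eq_mod_trace (K1 K2 E1 E2 : C) :
  E1 - E2 =
    K1 * (sigma ord0 ord0 + sigma ord_max ord_max - 1) + ('i ^+ 2 + 1) * K2 ->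
  E1 = E2.
Proof.
rewrite tr1 subrr sqrCi addNr !mul0r mulr0 addr0 => /eqP.
by rewrite subr_eq0 => /eqP.
Qed.

Lemma bloch_decomposition :
  sigma = 2%:R^-1 *:
    (T1 C false false + blochX sigma *: T1 C true false +
     blochY sigma *: T1 C true true + blochZ sigma *: T1 C false true).
Proof.
apply/matrixP => p q; rewrite !(T1E, mxE) /= /blochX /blochY /blochZ.
set b := sigma ord0 ord_max - sigma ord_max ord0.
case: (ord2_cases p) => ->; case: (ord2_cases q) => -> /=.
- by apply: (eq_mod_trace 2^-1 0); rewrite /b; field.
- by apply: (eq_mod_trace 0 (2^-1 * b)); rewrite /b; field.
- by apply: (eq_mod_trace 0 (- (2^-1 * b))); rewrite /b; field.
- by apply: (eq_mod_trace 2^-1 0); rewrite /b; field.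
Qed.

Hypothesis psd : forall v : 'rV[C]_2, 0 <= (v *m sigma *m adjmx v) 0 0.

Lemma ge0_mod_trace (K1 K2 : C) {E T : C} : 0 <= E ->
  T - E =
    K1 * (sigma ord0 ord0 + sigma ord_max ord_max - 1) + ('i ^+ 2 + 1) * K2 ->
  0 <= T.
Proof. by move=> hE /eq_mod_trace ->. Qed.

(* The Bloch coordinates of a density matrix lie in [-1, 1]: each bound is
   the positivity of v sigma v^dagger for a suitable test vector v. *)
Lemma blochX_bound k : 0 <= 1 + (-1) ^+ k * blochX sigma.
Proof.
apply: signed_ge0.
- apply: (ge0_mod_trace (-1) 0 (psd (row2 1 1))).
  by rewrite row2_form rmorph1 /blochX; ring.
- apply: (ge0_mod_trace (-1) 0 (psd (row2 1 (-1)))).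
  by rewrite row2_form rmorphN rmorph1 /blochX; ring.
Qed.

Lemma blochY_bound k : 0 <= 1 + (-1) ^+ k * blochY sigma.
Proof.
apply: signed_ge0.
- apply: (ge0_mod_trace (-1) (sigma ord_max ord_max) (psd (row2 1 (- 'i)))).
  by rewrite row2_form rmorph1 conjC_Ni /blochY; ring.
- apply: (ge0_mod_trace (-1) (sigma ord_max ord_max) (psd (row2 1 'i))).
  by rewrite row2_form rmorph1 conjCi /blochY; ring.
Qed.

Lemma blochZ_bound k : 0 <= 1 + (-1) ^+ k * blochZ sigma.
Proof.
apply: signed_ge0.
- apply: (ge0_mod_trace (-1) 0 (addr_ge0 (psd (row2 1 0)) (psd (row2 1 0)))).
  by rewrite row2_form rmorph1 rmorph0 /blochZ; ring.
- apply: (ge0_mod_trace (-1) 0 (addr_ge0 (psd (row2 0 1)) (psd (row2 0 1)))).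
  by rewrite row2_form rmorph1 rmorph0 /blochZ; ring.
Qed.
End DensityMatrix.

Lemma weighted_phase_sum (x y z : C) :
  \sum_(c : bool) \sum_(ux : bool) \sum_(uz : bool)
     qubit_weight x y z c ux uz *: phase1 C c ux uz =
  2%:R^-1 *: (T1 C false false + x *: T1 C true false +
              y *: T1 C true true + z *: T1 C false true).
Proof.
apply/matrixP => p q.
transitivity (\sum_(c : bool) \sum_(ux : bool) \sum_(uz : bool)
                qubit_weight x y z c ux uz * phase1 C c ux uz p q).
  rewrite summxE; apply: eq_bigr => c _; rewrite summxE; apply: eq_bigr => ux _.
  by rewrite summxE; apply: eq_bigr => uz _; rewrite mxE.
under eq_bigr do under eq_bigr do under eq_bigr do rewrite phase1E.
by rewrite (qubit_weight_phase _ _ _ _ (fun ax az => T1 C ax az p q)) !mxE.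
Qed.

Lemma single_qubit_rep (sigma : 'M[C]_2) : density sigma ->
  exists w : bool -> bool * bool -> C, single_rep sigma w.
Proof.
case=> _ psd tr; have tr1 : sigma ord0 ord0 + sigma ord_max ord_max = 1.
  by rewrite -tr /mxtrace sum_ord2.
pose w c (u : bool * bool) :=
  qubit_weight (blochX sigma) (blochY sigma) (blochZ sigma) c u.1 u.2.
exists w; split.
- move=> c u; apply: qubit_weight_ge0;
    [exact: blochX_bound | exact: blochY_bound | exact: blochZ_bound].
- by rewrite (sum_bool_split w) qubit_weight_sum.
- by rewrite single_rep_sum weighted_phase_sum -bloch_decomposition.
Qed.
End SingleQubit.

Theorem mainTheorem8 (C : numClosedFieldType) :
  (forall sigma : 'M[C]_2, density sigma ->
     exists w : bool -> bool * bool -> C, single_rep sigma w)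
  /\
  (forall (n : nat) (rho : 'I_n -> 'M[C]_2) (w : 'I_n -> bool -> bool * bool -> C),
     (forall i, density (rho i)) ->
     (forall i, single_rep (rho i) (w i)) ->
     nonneg_rep (Fb (n:=n)) (tens rho)
       (fun b u => \prod_(i < n) w i (b i) (u.1 i, u.2 i))).
Proof.
split; first exact: single_qubit_rep.
by move=> n rho w _; apply: product_rep.
Qed.
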